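(* Let $n\ge1$, $p \in [0,1/2]$, $q=1-p$, and for $r\ge0$ let $\mu_r = \mathbb{E}(X-np)^r$ where $X\sim\mathrm{Bin}(n,p)$. Define polynomials $\nu_r(x)$ recursively by $\nu_0 = 1$, $\nu_1 = 0$ and, for $r\ge2$, \[ \nu_r(x) = x \sum_{j=0}^{r-2} \binom{r-1}{j} \nu_j(x). \] Then $\mu_r \leq \nu_r(npq)$ for every $r\ge0$. *)

From HB Require Import structures.
From mathcomp Require Import all_boot all_order all_algebra.
Set Implicit Arguments. Unset Strict Implicit. Unset Printing Implicit Defensive.
Import Order.TTheory GRing.Theory Num.Theory.
Local Open Scope ring_scope.

Definition binom_central_moment (R : nzRingType) (n : nat) (p : R) (r : nat) : R :=
  \sum_(k < n.+1) ('C(n, k))%:R * p ^+ k * (1 - p) ^+ (n - k)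
                   * (k%:R - n%:R * p) ^+ r.

(* nu_seq m = [:: nu_0; nu_1; ...; nu_m], with nu_0 = 1, nu_1 = 0 and for
   r >= 2: nu_r = 'X * \sum_(j = 0..r-2) C(r-1, j) nu_j.  *)
Fixpoint nu_seq (R : nzRingType) (m : nat) : seq {poly R} :=
  match m with
  | 0 => [:: 1]
  | m'.+1 =>
      let s := nu_seq R m' in
      rcons s (if m' is 0 then 0
               else 'X * \sum_(j < m') (('C(m', j))%:R *: s`_j))
  end.

Definition nu (R : nzRingType) (r : nat) : {poly R} := (nu_seq R r)`_r.

From HB Require Import structures.
From mathcomp Require Import all_boot all_order all_algebra.
From mathcomp Require Import ring lra.
Import Order.TTheory GRing.Theory Num.Theory.
Local Open Scope ring_scope.

(* Write mu_n(r) = E (X - np)^r for X ~ Bin(n, p) and q = 1 - p.  Splitting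
   k - (n+1)p = k q - (n+1-k) p and using k C(n+1,k) = (n+1) C(n,k-1) and
   (n+1-k) C(n+1,k) = (n+1) C(n,k) yields the recursion in n
     mu_{n+1}(r+1) = (n+1) p q * sum_{j<=r} C(r,j) (q^{r-j} - (-p)^{r-j}) mu_n(j),
   in which every coefficient q^m - (-p)^m (m >= 1) lies in [0,1] when p <= 1/2.
   The polynomials nu_r have nonnegative coefficients, so they are nonnegative
   and nondecreasing on [0, +oo).  Comparing the recursion for mu with the
   defining recursion of nu, an induction on n shows simultaneously that
   0 <= mu_n(r) <= nu_r(npq) for all r. *)

Section NuPolynomials.
Variable R : realFieldType.

Lemma size_nu_seq m : size (nu_seq R m) = m.+1.
Proof. by elim: m => [|m IH] //=; rewrite size_rcons IH. Qed.

Lemma nu_seq_nth m j : (j <= m)%N -> (nu_seq R m)`_j = nu R j.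
Proof.
elim: m => [|m IH]; first by rewrite leqn0 => /eqP ->.
rewrite leq_eqVlt => /orP [/eqP -> //|hj].
by rewrite /= nth_rcons size_nu_seq hj IH.
Qed.

Lemma nu0 : nu R 0 = 1. Proof. by []. Qed.

Lemma nu1 : nu R 1 = 0. Proof. by []. Qed.

Lemma nuSS r : nu R r.+2 = 'X * \sum_(j < r.+1) ('C(r.+1, j))%:R *: nu R j.
Proof.
rewrite /nu -[nu_seq R r.+2]/(rcons (nu_seq R r.+1)
  ('X * \sum_(j < r.+1) ('C(r.+1, j))%:R *: (nu_seq R r.+1)`_j)).
rewrite nth_rcons size_nu_seq ltnn eqxx.
by congr (_ * _); apply: eq_bigr => j _; rewrite nu_seq_nth // ltnW.
Qed.

Lemma horner_nuSS r (x : R) :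
  (nu R r.+2).[x] = x * \sum_(j < r.+1) 'C(r.+1, j)%:R * (nu R j).[x].
Proof.
rewrite nuSS hornerM hornerX horner_sum.
by congr (_ * _); apply: eq_bigr => j _; rewrite hornerZ.
Qed.

Lemma nu_at0 r : (nu R r).[0] = (r == 0)%:R.
Proof. by case: r => [|[|r]]; rewrite ?nu0 ?nu1 ?horner_nuSS ?hornerE ?mul0r. Qed.

Lemma nu_ge0_mono r (x y : R) : 0 <= y -> y <= x ->
  0 <= (nu R r).[y] /\ (nu R r).[y] <= (nu R r).[x].
Proof.
move=> y0 yx; elim/ltn_ind: r => -[|[|r]] IH.
- by rewrite nu0 !hornerE; lra.
- by rewrite nu1 !hornerE.
have term (j : 'I_r.+1) : 0 <= 'C(r.+1, j)%:R * (nu R j).[y] /\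
    'C(r.+1, j)%:R * (nu R j).[y] <= 'C(r.+1, j)%:R * (nu R j).[x].
  have [h0 hle] := IH j (ltn_trans (ltn_ord j) (ltnSn _)).
  by split; [apply: mulr_ge0 | apply: ler_wpM2l].
have sum0 : 0 <= \sum_(j < r.+1) 'C(r.+1, j)%:R * (nu R j).[y].
  by apply: sumr_ge0 => j _; case: (term j).
rewrite !horner_nuSS.
split; first exact: mulr_ge0.
by apply: ler_pM => //; apply: ler_sum => j _; case: (term j).
Qed.

End NuPolynomials.

Section BinomialMoments.
Variable R : realFieldType.
Variable p : R.
Local Notation mu n r := (binom_central_moment n p r).

Lemma mu0 n : mu n 0 = 1.
Proof.
have : (1 - p + p) ^+ n = 1 by rewrite subrK expr1n.
rewrite exprDn => <-; rewrite /binom_central_moment.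
by apply: eq_bigr => i _; rewrite -mulr_natl; ring.
Qed.

Lemma mu_no_trial r : mu 0 r = (r == 0)%:R.
Proof.
rewrite /binom_central_moment big_ord1 /= !mul0r subrr expr0n.
by rewrite bin0 subn0 !expr0 !mul1r.
Qed.

Definition shifted_moment n c r := \sum_(i < n.+1)
  ('C(n, i))%:R * p ^+ i * (1 - p) ^+ (n - i) * (i%:R - n%:R * p + c) ^+ r.

Lemma shifted_momentE n c r : shifted_moment n c r =
  \sum_(j < r.+1) ('C(r, j))%:R * c ^+ (r - j) * mu n j.
Proof.
rewrite /shifted_moment /binom_central_moment.
transitivity (\sum_(i < n.+1) \sum_(j < r.+1) ('C(r, j))%:R * c ^+ (r - j) *
  (('C(n, i))%:R * p ^+ i * (1 - p) ^+ (n - i) * (i%:R - n%:R * p) ^+ j)).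
  apply: eq_bigr => i _; rewrite (addrC _ c) (exprDn c) mulr_sumr.
  by apply: eq_bigr => j _; rewrite -mulr_natl; ring.
by rewrite exchange_big; apply: eq_bigr => j _; rewrite mulr_sumr.
Qed.

Let E n k : R := k%:R - n%:R * p.

(* The part of mu_{n+1}(r+1) weighted by k q: reindexing k = i+1 and using
   k C(n+1,k) = (n+1) C(n,i) gives (n+1) p q times the moment shifted by q. *)
Lemma success_part n r :
  \sum_(k < n.+2) ('C(n.+1, k))%:R * p ^+ k * (1 - p) ^+ (n.+1 - k)
     * E n.+1 k ^+ r * (k%:R * (1 - p))
  = n.+1%:R * p * (1 - p) * shifted_moment n (1 - p) r.
Proof.
rewrite big_ord_recl /= !mul0r mulr0 add0r /shifted_moment mulr_sumr.
apply: eq_bigr => i _; rewrite /bump /= !add1n subSS.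
have hb : ('C(n.+1, i.+1)%:R * (i.+1)%:R : R) = n.+1%:R * ('C(n, i))%:R.
  by rewrite -!natrM mulnC -mul_bin_diag.
have -> : E n.+1 i.+1 = i%:R - n%:R * p + (1 - p) by rewrite /E -!natr1; ring.
transitivity ('C(n.+1, i.+1)%:R * (i.+1)%:R * (p * (1 - p) * (p ^+ i *
   (1 - p) ^+ (n - i) * (i%:R - n%:R * p + (1 - p)) ^+ r))); last first.
  by rewrite hb; ring.
by rewrite exprS; ring.
Qed.

(* The part weighted by (n+1-k) p: using (n+1-k) C(n+1,k) = (n+1) C(n,k)
   gives (n+1) p q times the moment shifted by -p. *)
Lemma failure_part n r :
  \sum_(k < n.+2) ('C(n.+1, k))%:R * p ^+ k * (1 - p) ^+ (n.+1 - k)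
     * E n.+1 k ^+ r * ((n.+1 - k)%:R * p)
  = n.+1%:R * p * (1 - p) * shifted_moment n (- p) r.
Proof.
rewrite big_ord_recr /= subnn !mul0r mulr0 addr0 /shifted_moment mulr_sumr.
apply: eq_bigr => i _ /=.
have hs : (n.+1 - i = (n - i).+1)%N by rewrite subSn //; have := ltn_ord i.
have hb : ('C(n.+1, i)%:R * (n - i).+1%:R : R) = n.+1%:R * ('C(n, i))%:R.
  by rewrite -hs -!natrM mulnC -mul_bin_down.
have -> : E n.+1 i = i%:R - n%:R * p + (- p) by rewrite /E -!natr1; ring.
rewrite hs.
transitivity ('C(n.+1, i)%:R * (n - i).+1%:R * (p * (1 - p) * (p ^+ i *
   (1 - p) ^+ (n - i) * (i%:R - n%:R * p + (- p)) ^+ r))); last first.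
  by rewrite hb; ring.
by rewrite exprS; ring.
Qed.

Lemma mu_rec n r : mu n.+1 r.+1 = n.+1%:R * p * (1 - p) *
  \sum_(j < r.+1) ('C(r, j))%:R * ((1 - p) ^+ (r - j) - (- p) ^+ (r - j)) * mu n j.
Proof.
have split_term k : (k <= n.+1)%N ->
    E n.+1 k ^+ r.+1 = E n.+1 k ^+ r * (k%:R * (1 - p))
                       - E n.+1 k ^+ r * ((n.+1 - k)%:R * p).
  by move=> hk; rewrite natrB // exprS /E; ring.
transitivity (n.+1%:R * p * (1 - p) *
  (shifted_moment n (1 - p) r - shifted_moment n (- p) r)).
  rewrite mulrBr -success_part -failure_part -sumrB.
  apply: eq_bigr => k _; rewrite /binom_central_moment -/(E n.+1 k).
  by rewrite split_term; [ring | rewrite -ltnS].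
rewrite (shifted_momentE n (1 - p)) (shifted_momentE n (- p)) -sumrB; congr (_ * _); apply: eq_bigr => j _; ring.
Qed.

End BinomialMoments.

(* For 0 <= p <= 1/2 and m >= 1, the coefficient q^m - (-p)^m lies in [0, 1]:
   p^m <= q^m bounds it below, and q^m + p^m <= q + p = 1 bounds it above. *)
Lemma moment_coef_bound (R : realFieldType) (p : R) m : (0 < m)%N ->
  0 <= p -> p <= 2^-1 -> 0 <= (1 - p) ^+ m - (- p) ^+ m <= 1.
Proof.
case: m => // m _ p0 ph.
have q0 : 0 <= 1 - p by lra.
have hq : (1 - p) ^+ m.+1 <= 1 - p.
  by rewrite exprS ler_piMr // exprn_ile1 //; lra.
have hp : p ^+ m.+1 <= p by rewrite exprS ler_piMr // exprn_ile1 //; lra.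
have hp0 : 0 <= p ^+ m.+1 by apply: exprn_ge0.
have hpq : p ^+ m.+1 <= (1 - p) ^+ m.+1 by apply: lerXn2r => //; lra.
rewrite exprNn -(signr_odd _ m.+1).
by case: (odd m.+1); rewrite ?expr1 ?expr0; apply/andP; split; lra.
Qed.

Lemma moment_bound_step (R : realFieldType) (p : R) n r :
  0 <= p -> p <= 2^-1 ->
  (forall j, (j <= r)%N -> 0 <= binom_central_moment n p j /\
     binom_central_moment n p j <= (nu R j).[n%:R * p * (1 - p)]) ->
  0 <= binom_central_moment n.+1 p r.+1 /\
  binom_central_moment n.+1 p r.+1 <= (nu R r.+1).[n.+1%:R * p * (1 - p)].
Proof.
move=> p0 ph IH.
set x := n.+1%:R * p * (1 - p); set y := n%:R * p * (1 - p).
have y0 : 0 <= y by rewrite /y !mulr_ge0 ?ler0n //; lra.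
have yx : y <= x by rewrite /x /y -!mulrA ler_wpM2r ?mulr_ge0 ?ler_nat //; lra.
have x0 : 0 <= x by lra.
(* The j-th term of mu_rec (for j < r; the term j = r vanishes) is
   nonnegative and bounded by the matching term of nu_{r+1}(x). *)
have term (j : 'I_r) :
    0 <= 'C(r, j)%:R * ((1 - p) ^+ (r - j) - (- p) ^+ (r - j))
         * binom_central_moment n p j /\
    'C(r, j)%:R * ((1 - p) ^+ (r - j) - (- p) ^+ (r - j))
         * binom_central_moment n p j <= 'C(r, j)%:R * (nu R j).[x].
  have /andP [d0 d1] := @moment_coef_bound R p (r - j) (ltac:(by rewrite subn_gt0)) p0 ph.
  have [m0 m1] := IH j (ltnW (ltn_ord j)).
  have [_ nu_yx] := @nu_ge0_mono R j x y y0 yx.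
  split; first by rewrite !mulr_ge0 ?ler0n.
  rewrite -mulrA ler_wpM2l ?ler0n //.
  have : ((1 - p) ^+ (r - j) - (- p) ^+ (r - j)) * binom_central_moment n p j
         <= binom_central_moment n p j by rewrite ler_piMl.
  by move: m1 nu_yx; rewrite -/y; lra.
rewrite mu_rec -/x big_ord_recr /= subnn !expr0 subrr mulr0 mul0r addr0.
case: r IH term => [|r] _ term; first by rewrite big_ord0 mulr0 nu1 hornerE; lra.
rewrite horner_nuSS.
split; first by apply: mulr_ge0 => //; apply: sumr_ge0 => j _; case: (term j).
by apply: ler_wpM2l => //; apply: ler_sum => j _; case: (term j).
Qed.

Theorem proposition18 (R : realFieldType) (n : nat) (p : R) (r : nat) :
  (0 < n)%N -> 0 <= p -> p <= 2^-1 ->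
  binom_central_moment n p r <= (nu R r).[n%:R * p * (1 - p)].
Proof.
move=> _ p0 ph.
suff bound m s : 0 <= binom_central_moment m p s /\
    binom_central_moment m p s <= (nu R s).[m%:R * p * (1 - p)].
  by case: (bound n r).
elim: m s => [|m IH] [|s]; try by rewrite mu0 nu0 hornerE; lra.
- by rewrite mu_no_trial !mul0r nu_at0 /=; lra.
- by apply: moment_bound_step => // j _; exact: IH.
Qed.
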